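(* Let $G$ be a countable vertex set with fixed vertex $o$, and let $c,b$ be conductance functions on $G$ with $b_{xy}\le c_{xy}$ for all $x,y$, such that $(G,c)$ and $(G,b)$ are connected locally finite networks. Let $\mathcal I:\mathcal H_{\mathcal E_c}\to\mathcal H_{\mathcal E_b}$ be the inclusion and $\mathcal I^*$ its adjoint. Then $\Delta_b=\mathcal I\Delta_c\mathcal I^*$.
   Context: A conductance function on a countable set $G$ is a symmetric map $c:G\times G\to[0,\infty)$ with $c_{xx}=0$; $x\sim y$ iff $c_{xy}>0$; locally finite and connected. $\mathcal E_c(u,v)=\frac12\sum_{x,y}c_{xy}\overline{(u(x)-u(y))}(v(x)-v(y))$; $\mathcal H_{\mathcal E_c}$ is the Hilbert space of finite-energy functions modulo constants with inner product $\mathcal E_c$. $v_x^{(c)}$ is the unique element of $\mathcal H_{\mathcal E_c}$ with $\langle v_x^{(c)},u\rangle_{\mathcal E_c}=u(x)-u(o)$ for all $u$. The Laplacian $(\Delta_c v)(x)=\sum_{y\sim x}c_{xy}(v(x)-v(y))$ is considered as an operator on $\mathcal H_{\mathcal E_c}$ with domain $\mathrm{span}\{v_x^{(c)}\}_{x\in G}$. Same notation for $b$. *)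

From HB Require Import structures.
From mathcomp Require Import all_boot all_order all_algebra.
From mathcomp Require Import all_classical all_reals all_analysis.
From mathcomp Require Import complex.
Set Implicit Arguments. Unset Strict Implicit. Unset Printing Implicit Defensive.
Import Order.TTheory GRing.Theory Num.Theory.
Local Open Scope classical_set_scope.
Local Open Scope ring_scope.

Section Networks.
Variables (R : realType) (G : countType).

Definition conductance (c : G -> G -> R) : Prop :=
  [/\ forall x y, c x y = c y x, forall x y, 0 <= c x y & forall x, c x x = 0].

Definition adj (c : G -> G -> R) : rel G := fun x y => 0 < c x y.

Definition locally_finite (c : G -> G -> R) : Prop :=
  forall x, finite_set [set y | adj c x y].

Definition net_connected (c : G -> G -> R) : Prop :=
  forall x y, exists p : seq G, path (adj c) x p && (last x p == y).

Definition cconj (z : R[i]) : R[i] := Complex (complex.Re z) (- complex.Im z).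
Definition cnormsq (z : R[i]) : R := complex.Re z ^+ 2 + complex.Im z ^+ 2.

Definition rsum (T : choiceType) (f : T -> R) : R :=
  fine (\esum_(i in [set: T]) (Num.max (f i) 0)%:E)
  - fine (\esum_(i in [set: T]) (Num.max (- f i) 0)%:E).

Definition finite_energy (c : G -> G -> R) (u : G -> R[i]) : Prop :=
  (\esum_(p in [set: G * G]) (c p.1 p.2 * cnormsq (u p.1 - u p.2))%:E < +oo)%E.

Definition energy_term (c : G -> G -> R) (u v : G -> R[i]) (p : G * G) : R[i] :=
  (c p.1 p.2)%:C%C * cconj (u p.1 - u p.2) * (v p.1 - v p.2).

Definition energy (c : G -> G -> R) (u v : G -> R[i]) : R[i] :=
  (2^-1 : R)%:C%C *
  Complex (rsum (fun p => complex.Re (energy_term c u v p)))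
          (rsum (fun p => complex.Im (energy_term c u v p))).

(* equality in H_E (functions modulo constants) *)
Definition eq_mod_const (u v : G -> R[i]) : Prop :=
  exists k : R[i], forall x, u x = v x + k.

(* v is (a representative of) the dipole v_x^{(c)} relative to o *)
Definition is_dipole (c : G -> G -> R) (o x : G) (v : G -> R[i]) : Prop :=
  finite_energy c v /\
  forall u, finite_energy c u -> energy c v u = u x - u o.

Definition in_dipole_span (c : G -> G -> R) (o : G) (w : G -> R[i]) : Prop :=
  exists (n : nat) (xs : 'I_n -> G) (a : 'I_n -> R[i]) (vs : 'I_n -> G -> R[i]),
    (forall i, is_dipole c o (xs i) (vs i)) /\
    eq_mod_const w (fun y => \sum_(i < n) a i * vs i y).

(* (Delta_c v)(x) = sum_{y ~ x} c_xy (v x - v y)  (finite sum by local finiteness) *)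
Definition laplacian (c : G -> G -> R) (v : G -> R[i]) (x : G) : R[i] :=
  (\sum_(y \in [set y | adj c x y]) (c x y)%:C%C * (v x - v y))%R.

(* A represents the adjoint I^* : H_{E_b} -> H_{E_c} of the inclusion
   I : H_{E_c} -> H_{E_b}, i.e. <I^* w, u>_c = <w, I u>_b *)
Definition is_adjoint_inclusion (c b : G -> G -> R) (A : (G -> R[i]) -> (G -> R[i]))
  : Prop :=
  (forall w, finite_energy b w -> finite_energy c (A w)) /\
  (forall w u, finite_energy b w -> finite_energy c u ->
     energy c (A w) u = energy b w u).

End Networks.

(* Pairing with the point mass [delta y] computes the conjugate of the Laplacian
   at [y]: only the edges at [y] carry energy, and each of them occurs in both
   orientations.  So the adjoint relation E_c(I^* w, delta y) = E_b(w, delta y)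
   gives Delta_c (I^* w) = Delta_b w pointwise.  Since b <= c, every function of
   finite c-energy has finite b-energy, hence I^* sends the b-dipole v_x to the
   c-dipole v_x.  On a connected network two finite-energy functions with the
   same energy pairing against everything differ by a constant (their difference
   has zero self-energy, so it is constant along every edge); therefore I^* w is
   congruent to sum_i a_i I^* v_(x_i) whenever w is congruent to sum_i a_i v_(x_i).
   Energies are absolutely convergent sums over G x G, so their sesquilinearity
   rests on the linearity of sums of summable real families. *)

From HB Require Import structures.
From mathcomp Require Import all_boot all_order all_algebra.
From mathcomp Require Import all_classical all_reals all_analysis.
From mathcomp Require Import complex.
From mathcomp Require Import ring lra.
Import Order.TTheory GRing.Theory Num.Theory.
Local Open Scope ring_scope.
Set Implicit Arguments. Unset Strict Implicit. Unset Printing Implicit Defensive.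

Section RealSummableFamilies.
Variables (R : realType) (T : choiceType).
Local Open Scope classical_set_scope.
Implicit Types (f g p n : T -> R).

Lemma esumZl (S : set T) (r : R) (a : T -> \bar R) : 0 <= r ->
  (forall i, (0 <= a i)%E) ->
  \esum_(i in S) (r%:E * a i)%E = (r%:E * \esum_(i in S) a i)%E.
Proof.
move=> r0 a0; rewrite /esum -ereal_supZl //; last first.
  by apply/set0P; exists 0%E, set0; [exact: fsets_set0 | rewrite fsbig_set0].
rewrite image_comp; congr ereal_sup.
by apply: eq_imagel => A _ /=; rewrite ge0_mule_fsumr.
Qed.

Lemma maxr0_ge0 (x : R) : 0 <= Num.max x 0.
Proof. by rewrite le_max lexx orbT. Qed.

Lemma maxr0_sub (x : R) : Num.max x 0 - Num.max (- x) 0 = x.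
Proof.
have [x0|x0] := leP 0 x.
  by rewrite max_r ?subr0 // oppr_le0.
by rewrite max_l ?sub0r ?opprK // oppr_ge0 ltW.
Qed.

Definition rsummable f := summable [set: T] (EFin \o f).

Lemma rsummable_ge0E f : (forall i, 0 <= f i) ->
  rsummable f = (\esum_(i in [set: T]) (f i)%:E < +oo)%E.
Proof.
move=> f0; rewrite /rsummable /summable; congr (_ < _)%E.
by apply: eq_esum => i _ /=; rewrite ger0_norm.
Qed.

Lemma esum_fineK f : (forall i, 0 <= f i) -> rsummable f ->
  \esum_(i in [set: T]) (f i)%:E = (fine (\esum_(i in [set: T]) (f i)%:E))%:E.
Proof.
move=> f0; rewrite rsummable_ge0E // => fin.
by rewrite fineK // ge0_fin_numE //; apply: esum_ge0 => i _; rewrite lee_fin.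
Qed.

Lemma rsummable_le f g : rsummable g -> (forall i, `|f i| <= `|g i|) -> rsummable f.
Proof. by move=> sg fg; apply: le_lt_trans sg; apply: le_esum => i _; rewrite lee_fin. Qed.

Lemma rsummableD f g : rsummable f -> rsummable g -> rsummable (fun i => f i + g i).
Proof.
rewrite /rsummable /summable /= => sf sg.
apply: (@le_lt_trans _ _ (\esum_(i in [set: T]) ((`|f i|)%:E + (`|g i|)%:E))%E).
  by apply: le_esum => i _; rewrite -EFinD lee_fin ler_normD.
by rewrite esumD ?lte_add_pinfty // => i _; rewrite lee_fin.
Qed.

Lemma rsummableZ (k : R) f : rsummable f -> rsummable (fun i => k * f i).
Proof.
rewrite /rsummable /summable /= => sf.
under eq_esum do rewrite normrM EFinM.
by rewrite esumZl // lte_mul_pinfty.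
Qed.

Lemma rsummable_ge0_le f g : rsummable g -> (forall i, 0 <= f i <= g i) -> rsummable f.
Proof.
move=> sg fg; apply: (rsummable_le sg) => i; have /andP[f0 fgi] := fg i.
by rewrite !ger0_norm // (le_trans f0).
Qed.

Lemma rsummableN f : rsummable f -> rsummable (fun i => - f i).
Proof. by move=> sf; apply: (rsummable_le sf) => i; rewrite normrN. Qed.

Lemma rsummable_pos f : rsummable f -> rsummable (fun i => Num.max (f i) 0).
Proof.
move=> sf; apply: (rsummable_le sf) => i.
by rewrite ger0_norm ?maxr0_ge0 // ge_max normr_ge0 ler_norm.
Qed.

Lemma fine_esumD f g : (forall i, 0 <= f i) -> (forall i, 0 <= g i) ->
  rsummable f -> rsummable g ->
  fine (\esum_(i in [set: T]) (f i + g i)%:E) =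
  fine (\esum_(i in [set: T]) (f i)%:E) + fine (\esum_(i in [set: T]) (g i)%:E).
Proof.
move=> f0 g0 sf sg; under eq_esum do rewrite EFinD.
rewrite esumD => [|i _|i _]; rewrite ?lee_fin //.
by rewrite (esum_fineK f0 sf) (esum_fineK g0 sg).
Qed.

Lemma fine_esumZ (k : R) f : 0 <= k -> (forall i, 0 <= f i) -> rsummable f ->
  fine (\esum_(i in [set: T]) (k * f i)%:E) = k * fine (\esum_(i in [set: T]) (f i)%:E).
Proof.
move=> k0 f0 sf; under eq_esum do rewrite EFinM.
by rewrite esumZl // (esum_fineK f0 sf) -EFinM.
Qed.

Lemma rsum_decomp f p n : (forall i, 0 <= p i) -> (forall i, 0 <= n i) ->
  rsummable p -> rsummable n -> (forall i, f i = p i - n i) ->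
  rsum f = fine (\esum_(i in [set: T]) (p i)%:E) - fine (\esum_(i in [set: T]) (n i)%:E).
Proof.
move=> p0 n0 sp sn fE.
have sP : rsummable (fun i => Num.max (f i) 0).
  apply: (rsummable_ge0_le sp) => i; rewrite maxr0_ge0 ge_max p0 andbT fE.
  by have := n0 i; lra.
have sN : rsummable (fun i => Num.max (- f i) 0).
  apply: (rsummable_ge0_le sn) => i; rewrite maxr0_ge0 ge_max n0 andbT fE.
  by have := p0 i; lra.
have : \esum_(i in [set: T]) ((Num.max (f i) 0)%:E + (n i)%:E)%E =
       \esum_(i in [set: T]) ((Num.max (- f i) 0)%:E + (p i)%:E)%E.
  apply: eq_esum => i _; rewrite -!EFinD; congr EFin.
  by have := maxr0_sub (f i); rewrite fE; lra.
rewrite !esumD; try by move=> i _; rewrite lee_fin ?maxr0_ge0.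
move: (esum_fineK (fun _ => maxr0_ge0 _) sP) (esum_fineK (fun _ => maxr0_ge0 _) sN).
move: (esum_fineK p0 sp) (esum_fineK n0 sn) => -> -> -> ->.
by rewrite -!EFinD => -[]; rewrite /rsum; lra.
Qed.

Lemma rsumD f g : rsummable f -> rsummable g -> rsum (fun i => f i + g i) = rsum f + rsum g.
Proof.
move=> sf sg; have [sPf sPg] := (rsummable_pos sf, rsummable_pos sg).
have [sNf sNg] := (rsummable_pos (rsummableN sf), rsummable_pos (rsummableN sg)).
rewrite (@rsum_decomp _ (fun i => Num.max (f i) 0 + Num.max (g i) 0)
                     (fun i => Num.max (- f i) 0 + Num.max (- g i) 0)).
- rewrite (fine_esumD (fun _ => maxr0_ge0 _) (fun _ => maxr0_ge0 _) sPf sPg).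
  rewrite (fine_esumD (fun _ => maxr0_ge0 _) (fun _ => maxr0_ge0 _) sNf sNg).
  by rewrite /rsum opprD addrACA.
- by move=> i; rewrite addr_ge0 ?maxr0_ge0.
- by move=> i; rewrite addr_ge0 ?maxr0_ge0.
- exact: rsummableD.
- exact: rsummableD.
- by move=> i; rewrite opprD addrACA !maxr0_sub.
Qed.

Lemma rsumN f : rsum (fun i => - f i) = - rsum f.
Proof.
rewrite /rsum opprB; congr (_ - _); congr fine.
by apply: eq_esum => i _ /=; rewrite opprK.
Qed.

Lemma rsumZ (k : R) f : rsummable f -> rsum (fun i => k * f i) = k * rsum f.
Proof.
wlog k0 : k / 0 <= k => [hwlog|] sf.
  have [/hwlog -> //|k0] := leP 0 k.
  have -> : (fun i => k * f i) = (fun i => - ((- k) * f i)).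
    by apply: funext => i; rewrite mulNr opprK.
  by rewrite rsumN hwlog ?mulNr ?opprK // oppr_ge0 ltW.
have [sP sN] := (rsummable_pos sf, rsummable_pos (rsummableN sf)).
rewrite (@rsum_decomp _ (fun i => k * Num.max (f i) 0) (fun i => k * Num.max (- f i) 0)).
- rewrite (fine_esumZ k0 (fun _ => maxr0_ge0 _) sP).
  by rewrite (fine_esumZ k0 (fun _ => maxr0_ge0 _) sN) -mulrBr.
- by move=> i; rewrite mulr_ge0 ?maxr0_ge0.
- by move=> i; rewrite mulr_ge0 ?maxr0_ge0.
- exact: rsummableZ.
- exact: rsummableZ.
- by move=> i; rewrite -mulrBr maxr0_sub.
Qed.

Lemma esum_finite_support (F : set T) (a : T -> \bar R) : finite_set F ->
  (forall i, 0 <= a i)%E -> (forall i, ~ F i -> a i = 0%E) ->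
  \esum_(i in [set: T]) a i = \sum_(i \in F) a i.
Proof.
move=> finF a0 aF; rewrite -esum_fset // [RHS]esum_mkcond.
by apply: eq_esum => i _; case: ifPn => // /negP; rewrite in_setE => /aF.
Qed.

Lemma rsum_finite_support (F : set T) f : finite_set F ->
  (forall i, ~ F i -> f i = 0) -> rsum f = \sum_(i \in F) f i.
Proof.
move=> finF fF; rewrite /rsum !(esum_finite_support finF).
- rewrite !fsumEFin //= !fsbig_finite //= -sumrB.
  by apply: eq_bigr => i _; rewrite maxr0_sub.
- by move=> i; rewrite lee_fin maxr0_ge0.
- by move=> i /fF ->; rewrite oppr0 maxxx.
- by move=> i; rewrite lee_fin maxr0_ge0.
- by move=> i /fF ->; rewrite maxxx.
Qed.

Lemma rsum_ge0_eq0 f : (forall i, 0 <= f i) -> rsummable f -> rsum f = 0 ->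
  forall i, f i = 0.
Proof.
move=> f0 sf; rewrite /rsum (@esum1 _ _ _ (fun i => (Num.max (- f i) 0)%:E)); last first.
  by move=> i _; rewrite max_r // oppr_le0.
under eq_esum do rewrite max_l //.
rewrite subr0 => sum0 i; apply/le_anti; rewrite f0 andbT -lee_fin.
rewrite -sum0 -(esum_fineK f0 sf); apply: esum_ge; exists [set i].
  by split => //; exact: finite_set1.
by rewrite fsbig_set1.
Qed.
End RealSummableFamilies.

Section ComplexSums.
Variables (R : realType) (T : choiceType).
Local Open Scope classical_set_scope.
Implicit Types (f g : T -> R[i]).

Definition csum f : R[i] :=
  Complex (rsum (fun i => complex.Re (f i))) (rsum (fun i => complex.Im (f i))).

Definition csummable f :=
  rsummable (fun i => complex.Re (f i)) /\ rsummable (fun i => complex.Im (f i)).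

Lemma ReM (x y : R[i]) :
  complex.Re (x * y) = complex.Re x * complex.Re y - complex.Im x * complex.Im y.
Proof. by case: x; case: y. Qed.

Lemma ImM (x y : R[i]) :
  complex.Im (x * y) = complex.Re x * complex.Im y + complex.Im x * complex.Re y.
Proof. by case: x => a b; case: y => c d /=; rewrite addrC. Qed.

Lemma csumD f g : csummable f -> csummable g ->
  csum (fun i => f i + g i) = csum f + csum g.
Proof.
move=> [sRf sIf] [sRg sIg]; rewrite /csum.
have -> : (fun i => complex.Re (f i + g i)) = fun i => complex.Re (f i) + complex.Re (g i).
  by apply: funext => i; rewrite raddfD.
have -> : (fun i => complex.Im (f i + g i)) = fun i => complex.Im (f i) + complex.Im (g i).
  by apply: funext => i; rewrite raddfD.
by rewrite !rsumD.
Qed.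

Lemma csumZ (a : R[i]) f : csummable f -> csum (fun i => a * f i) = a * csum f.
Proof.
move=> [sRf sIf]; rewrite /csum.
have -> : (fun i => complex.Re (a * f i)) =
    fun i => complex.Re a * complex.Re (f i) + - (complex.Im a * complex.Im (f i)).
  by apply: funext => i; rewrite ReM.
have -> : (fun i => complex.Im (a * f i)) =
    fun i => complex.Re a * complex.Im (f i) + complex.Im a * complex.Re (f i).
  by apply: funext => i; rewrite ImM.
rewrite rsumD; last 2 first.
- exact: rsummableZ.
- exact/rsummableN/rsummableZ.
rewrite rsumD; last 2 first.
- exact: rsummableZ.
- exact: rsummableZ.
rewrite rsumN !rsumZ //.
by case: a.
Qed.

Lemma csum_finite_support (F : set T) f : finite_set F ->
  (forall i, ~ F i -> f i = 0) -> csum f = \sum_(i \in F) f i.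
Proof.
move=> finF fF; rewrite /csum !(rsum_finite_support finF); last 2 first.
- by move=> i /fF ->.
- by move=> i /fF ->.
rewrite !fsbig_finite //= -!raddf_sum.
by case: (\sum_(i <- _) f i).
Qed.
End ComplexSums.

Lemma cconjE (R : realType) (z : R[i]) : cconj z = z^*%C.
Proof. by case: z. Qed.

Lemma cconj0 (R : realType) : cconj (0 : R[i]) = 0.
Proof. by rewrite cconjE rmorph0. Qed.

Lemma cconjN1 (R : realType) : cconj (-1 : R[i]) = -1.
Proof. by rewrite cconjE rmorphN1. Qed.

Lemma cconjK (R : realType) : involutive (@cconj R).
Proof. by move=> z; rewrite !cconjE conjcK. Qed.

Lemma cconjM (R : realType) (x y : R[i]) : cconj (x * y) = cconj x * cconj y.
Proof. by rewrite !cconjE rmorphM. Qed.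

Lemma cconj_real (R : realType) (k : R) : cconj (k%:C)%C = (k%:C)%C.
Proof. by rewrite /cconj /= oppr0. Qed.

Lemma cconj_sum (R : realType) (I : Type) (s : seq I) (F : I -> R[i]) :
  cconj (\sum_(i <- s) F i) = \sum_(i <- s) cconj (F i).
Proof. by rewrite cconjE rmorph_sum; apply: eq_bigr => i _; rewrite cconjE. Qed.

Lemma cnormsq_ge0 (R : realType) (z : R[i]) : 0 <= cnormsq z.
Proof. by rewrite addr_ge0 ?sqr_ge0. Qed.

Lemma cnormsq_eq0 (R : realType) (z : R[i]) : (cnormsq z == 0) = (z == 0).
Proof.
case: z => a b; rewrite /cnormsq /= paddr_eq0 ?sqr_ge0 // !sqrf_eq0.
by rewrite eq_complex.
Qed.

Lemma cnormsqM (R : realType) (a z : R[i]) : cnormsq (a * z) = cnormsq a * cnormsq z.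
Proof. by case: a => ? ?; case: z => ? ?; rewrite /cnormsq /=; ring. Qed.

Lemma cnormsqD_le (R : realType) (z w : R[i]) :
  cnormsq (z + w) <= 2 * cnormsq z + 2 * cnormsq w.
Proof.
case: z => a b; case: w => x y; rewrite /cnormsq /=.
by have := sqr_ge0 (a - x); have := sqr_ge0 (b - y); nra.
Qed.

Lemma energy_term_bound (R : realType) (k : R) (z w : R[i]) : 0 <= k ->
  `|complex.Re ((k%:C)%C * cconj z * w)| <= k * cnormsq z + k * cnormsq w /\
  `|complex.Im ((k%:C)%C * cconj z * w)| <= k * cnormsq z + k * cnormsq w.
Proof.
case: z => a b; case: w => x y k0; rewrite /cnormsq /=.
have sq u v := mulr_ge0 k0 (sqr_ge0 (u + v)).
split; rewrite ler_norml; apply/andP; split.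
- by have := sq a x; have := sq b y; nra.
- by have := sq a (- x); have := sq b (- y); nra.
- by have := sq a y; have := sq b (- x); nra.
- by have := sq a (- y); have := sq b x; nra.
Qed.

Section Energy.
Variables (R : realType) (G : countType) (c : G -> G -> R).
Hypothesis c_ge0 : forall x y, 0 <= c x y.
Implicit Types (f g u v : G -> R[i]).

Lemma energyE u v : energy c u v = ((2^-1 : R)%:C)%C * csum (energy_term c u v).
Proof. by []. Qed.

Lemma finite_energyE u :
  finite_energy c u = rsummable (fun p : G * G => c p.1 p.2 * cnormsq (u p.1 - u p.2)).
Proof. by rewrite rsummable_ge0E // => p; rewrite mulr_ge0 ?cnormsq_ge0. Qed.

Lemma csummable_energy_term u v : finite_energy c u -> finite_energy c v ->
  csummable (energy_term c u v).
Proof.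
rewrite !finite_energyE => fu fv; have fuv := rsummableD fu fv.
split; apply: (rsummable_le fuv) => p;
  have [bRe bIm] := energy_term_bound (u p.1 - u p.2) (v p.1 - v p.2) (c_ge0 p.1 p.2);
  rewrite [X in _ <= X]ger0_norm ?addr_ge0 ?mulr_ge0 ?cnormsq_ge0 //.
Qed.

Lemma finite_energyD f g : finite_energy c f -> finite_energy c g ->
  finite_energy c (fun x => f x + g x).
Proof.
rewrite !finite_energyE => ff fg.
have s := rsummableD (rsummableZ 2 ff) (rsummableZ 2 fg).
apply: (rsummable_le s) => p; rewrite !ger0_norm ?addr_ge0 ?mulr_ge0 ?cnormsq_ge0 //.
rewrite mulrCA [_ * (c _ _ * _)]mulrCA -mulrDr ler_wpM2l //.
by rewrite opprD addrACA; exact: cnormsqD_le.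
Qed.

Lemma finite_energyZ (a : R[i]) f : finite_energy c f -> finite_energy c (fun x => a * f x).
Proof.
rewrite !finite_energyE => ff; apply: (rsummable_le (rsummableZ (cnormsq a) ff)) => p.
by rewrite -mulrBr cnormsqM mulrCA.
Qed.

Lemma energyD f g u : finite_energy c f -> finite_energy c g -> finite_energy c u ->
  energy c (fun x => f x + g x) u = energy c f u + energy c g u.
Proof.
move=> ff fg fu; rewrite !energyE -mulrDr -csumD; try exact: csummable_energy_term.
congr (_ * csum _); apply: funext => p.
by rewrite /energy_term !cconjE !rmorphB !rmorphD; ring.
Qed.

Lemma energyZ (a : R[i]) f u : finite_energy c f -> finite_energy c u ->
  energy c (fun x => a * f x) u = cconj a * energy c f u.
Proof.
move=> ff fu; rewrite !energyE [RHS]mulrCA -[in RHS]csumZ; last first.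
  exact: csummable_energy_term.
congr (_ * csum _); apply: funext => p.
by rewrite /energy_term !cconjE !rmorphB !rmorphM; ring.
Qed.

Lemma finite_energyB f g : finite_energy c f -> finite_energy c g ->
  finite_energy c (fun x => f x - g x).
Proof.
move=> ff fg; under eq_fun do rewrite -mulN1r.
by apply: finite_energyD => //; exact: finite_energyZ.
Qed.

Lemma energyB f g u : finite_energy c f -> finite_energy c g -> finite_energy c u ->
  energy c (fun x => f x - g x) u = energy c f u - energy c g u.
Proof.
move=> ff fg fu; under eq_fun do rewrite -mulN1r.
rewrite energyD //; last exact: finite_energyZ.
by rewrite energyZ // cconjN1 mulN1r.
Qed.

Lemma energy_shift f (k : R[i]) u : energy c (fun x => f x + k) u = energy c f u.
Proof.
rewrite !energyE; congr (_ * csum _); apply: funext => p.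
by rewrite /energy_term opprD addrACA subrr addr0.
Qed.

Lemma finite_energy_sum n (a : 'I_n -> R[i]) (fs : 'I_n -> G -> R[i]) :
  (forall i, finite_energy c (fs i)) ->
  finite_energy c (fun x => \sum_(i < n) a i * fs i x).
Proof.
elim: n a fs => [|n IH] a fs ffs.
  rewrite /finite_energy esum1 // => p _.
  by rewrite !big_ord0 subrr /cnormsq /= expr0n /= addr0 mulr0.
under [X in finite_energy c X]funext do rewrite big_ord_recr.
by apply: finite_energyD; [apply: IH | apply: finite_energyZ].
Qed.

Lemma energy_sum n (a : 'I_n -> R[i]) (fs : 'I_n -> G -> R[i]) u :
  (forall i, finite_energy c (fs i)) -> finite_energy c u ->
  energy c (fun x => \sum_(i < n) a i * fs i x) u =
  \sum_(i < n) cconj (a i) * energy c (fs i) u.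
Proof.
elim: n a fs => [|n IH] a fs ffs fu.
  have -> : (fun x => \sum_(i < 0) a i * fs i x) = (fun x => 0 * u x).
    by apply: funext => x; rewrite big_ord0 mul0r.
  by rewrite energyZ // cconj0 mul0r big_ord0.
under [X in energy c X]funext do rewrite big_ord_recr /=.
rewrite energyD; [|exact: finite_energy_sum|exact: finite_energyZ|exact: fu].
by rewrite energyZ // IH // big_ord_recr.
Qed.
End Energy.

Section Network.
Variables (R : realType) (G : countType) (c : G -> G -> R).
Hypothesis cc : conductance c.
Local Open Scope classical_set_scope.
Implicit Types (u d : G -> R[i]).

Lemma conductance_sym x y : c x y = c y x. Proof. by case: cc. Qed.
Lemma conductance_ge0 x y : 0 <= c x y. Proof. by case: cc. Qed.
Lemma conductance_diag x : c x x = 0. Proof. by case: cc. Qed.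

Lemma adj_irrefl x : ~ adj c x x.
Proof. by rewrite /adj conductance_diag ltxx. Qed.

Lemma not_adj_eq0 x y : ~ adj c x y -> c x y = 0.
Proof.
by move/negP; rewrite /adj -leNgt => c0; apply/le_anti; rewrite c0 conductance_ge0.
Qed.

Lemma adj_const d : net_connected c -> (forall x y, adj c x y -> d x = d y) ->
  forall x y, d x = d y.
Proof.
move=> conn dadj x y; have [p /andP[xp /eqP <-]] := conn x y.
by elim: p x xp => [|z p IH] x //= /andP[/dadj -> /IH].
Qed.

Lemma Re_energy_term_diag u (p : G * G) :
  complex.Re (energy_term c u u p) = c p.1 p.2 * cnormsq (u p.1 - u p.2).
Proof. by rewrite /energy_term /cnormsq; case: (u p.1 - u p.2) => a b /=; ring. Qed.

Lemma energy_self_eq0_const d : net_connected c -> finite_energy c d ->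
  energy c d d = 0 -> forall x y, d x = d y.
Proof.
move=> conn fd /eqP; rewrite energyE mulf_eq0 -(rmorph0 (real_complex R)).
rewrite (inj_eq (@complexI R)) invr_eq0 pnatr_eq0 /= => /eqP [sum0 _].
have dens0 : forall p : G * G, c p.1 p.2 * cnormsq (d p.1 - d p.2) = 0.
  move: sum0; under eq_fun do rewrite Re_energy_term_diag.
  apply: rsum_ge0_eq0; last by rewrite -finite_energyE //; exact: conductance_ge0.
  by move=> p; rewrite mulr_ge0 ?cnormsq_ge0 ?conductance_ge0.
apply: (adj_const (d := d) conn) => x y xy.
apply/eqP; rewrite -subr_eq0 -cnormsq_eq0.
by have /eqP := dens0 (x, y); rewrite mulf_eq0 gt_eqF.
Qed.

Definition delta (y : G) : G -> R[i] := fun x => (x == y)%:R.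

Definition incident_edges (y : G) : set (G * G) :=
  (fun z => (y, z)) @` [set z | adj c y z] `|` (fun z => (z, y)) @` [set z | adj c y z].

Lemma incident_edges_finite y : locally_finite c -> finite_set (incident_edges y).
Proof. by move=> lf; rewrite finite_setU; split; apply: finite_image; apply: lf. Qed.

Lemma not_incident_edges y (p : G * G) : ~ incident_edges y p ->
  c p.1 p.2 = 0 \/ delta y p.1 = delta y p.2.
Proof.
case: p => x z /= notF; have [xz|/not_adj_eq0] := pselect (adj c x z); last by left.
right; rewrite /delta; have [xy|_] := eqVneq x y.
  by exfalso; apply: notF; left; exists z; rewrite // -xy.
have [zy|//] := eqVneq z y.
by exfalso; apply: notF; right; exists x; rewrite /= ?zy // /adj conductance_sym -zy.
Qed.

Lemma finite_energy_delta y : locally_finite c -> finite_energy c (delta y).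
Proof.
move=> lf; rewrite /finite_energy (esum_finite_support (incident_edges_finite y lf)).
- by rewrite fsumEFin ?ltry //; exact: incident_edges_finite.
- by move=> p; rewrite lee_fin mulr_ge0 ?cnormsq_ge0 ?conductance_ge0.
- move=> p /not_incident_edges [->|->]; first by rewrite mul0r.
  by rewrite subrr /cnormsq /= expr0n /= addr0 mulr0.
Qed.

Lemma energy_delta u y : locally_finite c ->
  energy c u (delta y) = cconj (laplacian c u y).
Proof.
move=> lf; have lfy := lf y.
have adj_neq z : adj c y z -> (z == y) = false.
  by move=> yz; apply/eqP => zy; apply: (@adj_irrefl y); rewrite -{2}zy.
have edge_out z : z \in [set z | adj c y z] ->
    energy_term c u (delta y) (y, z) = cconj ((c y z)%:C%C * (u y - u z)).
  rewrite inE => yz; rewrite /energy_term /delta /= eqxx adj_neq // subr0 mulr1.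
  by rewrite cconjM cconj_real.
have edge_in z : z \in [set z | adj c y z] ->
    energy_term c u (delta y) (z, y) = cconj ((c y z)%:C%C * (u y - u z)).
  rewrite inE => yz; rewrite /energy_term /delta /= eqxx adj_neq // sub0r mulrN1.
  by rewrite conductance_sym cconjM cconj_real -mulrN !cconjE -rmorphN opprB.
rewrite energyE (csum_finite_support (incident_edges_finite y lf)); last first.
  move=> p /not_incident_edges [c0|d0]; rewrite /energy_term.
    by rewrite c0 (rmorph0 (real_complex R)) !mul0r.
  by rewrite d0 subrr mulr0.
rewrite fsbigU0; last 3 first.
- exact: finite_image.
- exact: finite_image.
- by move=> p [[z1 yz1 <-] [z2 _ [_ yz1E]]]; apply: (@adj_irrefl y); rewrite {2}yz1E.
rewrite !fsbig_image; last 2 first.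
- by move=> z1 z2 _ _ [].
- by move=> z1 z2 _ _ [].
(* each edge at [y] is met in both orientations, which cancels the factor [1/2] *)
rewrite (eq_fsbigr _ _ edge_out) (eq_fsbigr _ _ edge_in) /=.
rewrite -mulr2n mulrnAr -mulr_natr mulrAC.
have -> : (2^-1 : R)%:C%C * 2%:R = 1.
  by rewrite -(rmorph_nat (real_complex R)) -rmorphM mulVf ?pnatr_eq0.
by rewrite mul1r /laplacian !fsbig_finite //= cconj_sum.
Qed.
End Network.

Lemma eq_mod_const_energy (R : realType) (G : countType) (c : G -> G -> R)
    (f g : G -> R[i]) :
  conductance c -> net_connected c -> finite_energy c f -> finite_energy c g ->
  (forall u, finite_energy c u -> energy c f u = energy c g u) -> eq_mod_const f g.
Proof.
move=> cc conn ff fg fgE; have c0 := conductance_ge0 cc.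
have fd := finite_energyB c0 ff fg.
have dconst := energy_self_eq0_const cc conn fd.
have {}dconst x y : f x - g x = f y - g y.
  by apply: dconst x y; rewrite energyB // fgE // subrr.
have [[x0 _]|noG] := pselect (exists x : G, True).
  by exists (f x0 - g x0) => x; rewrite -(dconst x) addrC subrK.
by exists 0 => x; exfalso; apply: noG; exists x.
Qed.

Section AdjointInclusion.
Variables (R : realType) (G : countType) (o : G) (c b : G -> G -> R).
Hypotheses (cc : conductance c) (cb : conductance b).
Hypothesis b_le_c : forall x y, b x y <= c x y.
Variable A : (G -> R[i]) -> (G -> R[i]).
Hypothesis adjA : is_adjoint_inclusion c b A.

Lemma finite_energy_le u : finite_energy c u -> finite_energy b u.
Proof.
apply: le_lt_trans; apply: le_esum => p _.
by rewrite lee_fin ler_wpM2r ?cnormsq_ge0.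
Qed.

Lemma adjoint_dipole x v : is_dipole b o x v -> is_dipole c o x (A v).
Proof.
case: adjA => finA eqA [fv vE]; split; first exact: finA.
by move=> u fu; rewrite eqA // vE //; exact: finite_energy_le.
Qed.

Lemma adjoint_dipole_span w : net_connected c -> finite_energy b w ->
  in_dipole_span b o w -> in_dipole_span c o (A w).
Proof.
case: adjA => finA eqA connc fw [n [xs [a [vs [dip [k wE]]]]]].
exists n, xs, a, (fun i => A (vs i)); split => [i|]; first exact: adjoint_dipole.
have fvs i : finite_energy b (vs i) by case: (dip i).
have fAvs i : finite_energy c (A (vs i)) by exact: finA.
have fsum := finite_energy_sum (conductance_ge0 cc) a fAvs.
apply: (eq_mod_const_energy cc connc (finA _ fw) fsum).
move=> u fu; have fbu := finite_energy_le fu.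
rewrite eqA // (energy_sum (conductance_ge0 cc)) //.
have -> : w = (fun x => \sum_(i < n) a i * vs i x + k) by apply: funext.
rewrite energy_shift (energy_sum (conductance_ge0 cb)) //.
by apply: eq_bigr => i _; rewrite eqA.
Qed.

Lemma adjoint_laplacian w : locally_finite c -> locally_finite b ->
  finite_energy b w -> forall y, laplacian b w y = laplacian c (A w) y.
Proof.
case: adjA => _ eqA lfc lfb fw y.
rewrite -[LHS]cconjK -[RHS]cconjK.
rewrite -(energy_delta cb _ _ lfb) -(energy_delta cc _ _ lfc).
by rewrite eqA //; exact: finite_energy_delta.
Qed.
End AdjointInclusion.

Theorem lemma3p10 (R : realType) (G : countType) (o : G) (c b : G -> G -> R) :
  conductance c -> conductance b ->
  locally_finite c -> locally_finite b ->
  net_connected c -> net_connected b ->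
  (forall x y, b x y <= c x y) ->
  forall A : (G -> R[i]) -> (G -> R[i]),
  is_adjoint_inclusion c b A ->
  forall w : G -> R[i],
  finite_energy b w -> in_dipole_span b o w ->
  in_dipole_span c o (A w) /\
  eq_mod_const (laplacian b w) (laplacian c (A w)).
Proof.
move=> cc cb lfc lfb connc _ b_le_c A adjA w fw spw; split.
  exact: (adjoint_dipole_span cc cb b_le_c adjA connc fw spw).
by exists 0 => y; rewrite addr0 (adjoint_laplacian cc cb adjA).
Qed.
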